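(* Let $X\subseteq\Omega$ be club in $\Omega$ with $0\notin X$, $\Theta=\Theta_X$. Let $\alpha=\Omega\tilde\alpha$ (a multiple of $\Omega$) and $\beta<\Omega$. If $\alpha+\beta\in\hat\varepsilon_{\Omega+1}$, $\alpha+\beta$ is a limit ordinal, $\alpha+\beta\notin\mathrm{FIX}(X)$, and $(\beta_n)_{n<\omega}$ is a strictly increasing sequence with supremum $\beta$, then $(\Theta(\alpha+\beta_n))_{n<\omega}$ is strictly increasing with supremum $\Theta(\alpha+\beta)$.
   Context: $\Omega$ is the first uncountable ordinal; $\varepsilon_{\Omega+1}$ the least $\varepsilon>\Omega$ with $\omega^\varepsilon=\varepsilon$. Every $0<\xi<\varepsilon_{\Omega+1}$ has a unique $\Omega$-normal form $\xi=\Omega^{\alpha}\beta+\gamma$ with $0<\beta<\Omega$, $\gamma<\Omega^{\alpha}$. $C(0)=\{0\}$, $C(\Omega^\alpha\beta+\gamma)=C(\alpha)\cup C(\gamma)\cup\{\beta\}$; $\xi^*=\max C(\xi)$. For $\theta<\Omega$: $0[\theta]=1[\theta]=0$; $(\Omega^\alpha\beta+\gamma)[\theta]=\Omega^\alpha\beta+\gamma[\theta]$ if $\gamma>0$; $(\Omega^\alpha\beta)[\theta]=\Omega^\alpha\theta$ if $\beta$ is a limit; $\Omega^{\alpha+1}[\theta]=\Omega^\alpha\theta$; $(\Omega^\alpha(\beta+1))[\theta]=\Omega^\alpha\beta+(\Omega^\alpha)[\theta]$ if $\beta>0$; $\Omega^\alpha[\theta]=\Omega^{\alpha[\theta]}$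 if $\alpha$ is a limit. $\tau(0)=0$, $\tau(\zeta+1)=1$, $\tau(\Omega^\alpha\beta+\gamma)=\tau(\gamma)$ if $\gamma>0$, $\tau(\Omega^\alpha\beta)=\beta$ if $\beta$ limit, $\tau(\Omega^\alpha(\beta+1))=\tau(\alpha)$ if $\alpha$ limit, $\tau(\Omega^{\alpha+1}(\beta+1))=\Omega$. $\Theta_X(\xi)$ is the least $\theta\in X$ with $\theta>\xi^*$ such that all $\zeta<\xi$ with $\zeta^*<\theta$ have $\Theta_X(\zeta)<\theta$. $\Omega_0=1$, $\Omega_{n+1}=\Omega^{\Omega_n}$, $\Theta_X(\varepsilon_{\Omega+1})=\sup_n\Theta_X(\Omega_n)$, $\hat\varepsilon_{\Omega+1}=\{\xi<\varepsilon_{\Omega+1}:\xi^*<\Theta_X(\varepsilon_{\Omega+1})\}$. $\mathrm{FIX}(X)$ is the set of $\xi<\varepsilon_{\Omega+1}$ with $(\xi[1])^*<\xi^*=\tau(\xi)=\Theta_X(\gamma)$ for some $\gamma>\xi$. *)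

(* Ordinals below epsilon_{Omega+1} are represented by
   Omega-normal forms whose coefficients live in an abstract copy of
   Omega = omega_1 (a well-order that is uncountable but all of whose proper
   initial segments are countable; this characterizes omega_1 up to iso). *)
From Stdlib Require Import ClassicalEpsilon ClassicalDescription List.
Set Implicit Arguments.

Record Omega1 := {
  carrier :> Type;
  ltO : carrier -> carrier -> Prop;
  inhO : carrier;
  ltO_irrefl : forall x, ~ ltO x x;
  ltO_trans : forall x y z, ltO x y -> ltO y z -> ltO x z;
  ltO_total : forall x y, ltO x y \/ x = y \/ ltO y x;
  ltO_wf : well_founded ltO;
  ltO_uncountable : ~ exists f : carrier -> nat, forall x y, f x = f y -> x = y;
  ltO_segments_countable :
    forall a, exists f : {x | ltO x a} -> nat, forall x y, f x = f y -> x = y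
}.

Definition pdec (P : Prop) : bool :=
  if excluded_middle_informative P then true else false.

Section Defs.
Variable O : Omega1.
Local Notation lt := (ltO O).

Definition leO (x y : O) := x = y \/ lt x y.
Definition epsO (P : O -> Prop) : O := epsilon (inhabits (inhO O)) P.

Definition z0 : O := epsO (fun x => forall y, ~ lt y x).
Definition succO (b : O) : O :=
  epsO (fun s => lt b s /\ forall y, lt b y -> leO s y).
Definition one : O := succO z0.
Definition isSuccO (b : O) := exists c, b = succO c.
Definition predO (b : O) : O := epsO (fun c => b = succO c).
Definition isLimitO (b : O) := b <> z0 /\ ~ isSuccO b.
Definition isFiniteO (b : O) := forall c, leO c b -> ~ isLimitO c.
(* 1 + b for b < Omega *)
Definition onepO (b : O) : O := if pdec (isFiniteO b) then succO b else b.
Definition maxO (x y : O) : O := if pdec (lt x y) then y else x.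
Definition IsSup (f : nat -> O) (s : O) :=
  (forall n, leO (f n) s) /\ (forall c, (forall n, leO (f n) c) -> leO s c).

Definition club (X : O -> Prop) :=
  (forall a, exists x, X x /\ lt a x) /\
  (forall l, isLimitO l -> (forall a, lt a l -> exists x, X x /\ lt a x /\ lt x l) -> X l).

(* Omega-normal forms: TT a b g = Omega^a * b + g *)
Inductive T : Type := TZ | TT (a : T) (b : O) (g : T).

Fixpoint ltT (x y : T) {struct x} : Prop :=
  match x, y with
  | TZ, TZ => False
  | TZ, TT _ _ _ => True
  | TT _ _ _, TZ => False
  | TT a b g, TT a' b' g' =>
      ltT a a' \/ (a = a' /\ (lt b b' \/ (b = b' /\ ltT g g')))
  end.

(* well-formed normal forms: 0 < b < Omega, g < Omega^a *)
Fixpoint wfT (x : T) : Prop :=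
  match x with
  | TZ => True
  | TT a b g => wfT a /\ wfT g /\ lt z0 b /\
      match g with TZ => True | TT a' _ _ => ltT a' a end
  end.

Fixpoint Cset (x : T) : list O :=
  match x with
  | TZ => z0 :: nil
  | TT a b g => Cset a ++ Cset g ++ (b :: nil)
  end.
Definition star (x : T) : O := fold_right maxO z0 (Cset x).

Definition oneT : T := TT TZ one TZ.
Definition omt (a : T) (t : O) : T := if pdec (t = z0) then TZ else TT a t TZ.

Fixpoint succT (x : T) : T :=
  match x with
  | TZ => oneT
  | TT a b g =>
      match g with
      | TT _ _ _ => TT a b (succT g)
      | TZ => match a with
              | TZ => TT TZ (succO b) TZ
              | _ => TT a b oneT
              end
      end
  end.
Definition isSuccT (x : T) := exists z, wfT z /\ x = succT z.
Definition predT (x : T) : T := epsilon (inhabits TZ) (fun z => wfT z /\ x = succT z).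
Definition isLimitT (x : T) := x <> TZ /\ ~ isSuccT x.

Fixpoint fs (x : T) (t : O) : T :=
  match x with
  | TZ => TZ
  | TT a b g =>
      match g with
      | TT _ _ _ => TT a b (fs g t)
      | TZ =>
          let pw :=
            match a with
            | TZ => TZ (* Omega^0 = 1, 1[t] = 0 *)
            | _ => if pdec (isSuccT a) then omt (predT a) t
                   else TT (fs a t) one TZ
            end in
          if pdec (isLimitO b) then omt a t
          else if pdec (b = one) then pw
          else TT a (predO b) pw
      end
  end.

(* tau; None stands for Omega *)
Fixpoint tau (x : T) : option O :=
  match x with
  | TZ => Some z0
  | TT a b g =>
      match g with
      | TT _ _ _ => tau g
      | TZ =>
          if pdec (isLimitO b) then Some b
          else match a with
               | TZ => Some one
               | _ => if pdec (isSuccT a) then None else tau a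
               end
      end
  end.

(* Omega * x *)
Definition onepT (a : T) : T :=
  match a with
  | TZ => oneT
  | TT e c h => match e with TZ => TT TZ (onepO c) h | _ => a end
  end.
Fixpoint omul (x : T) : T :=
  match x with
  | TZ => TZ
  | TT a b g => TT (onepT a) b (omul g)
  end.

(* alpha + beta for alpha a multiple of Omega and beta < Omega *)
Fixpoint appT (x y : T) : T :=
  match x with TZ => y | TT a b g => TT a b (appT g y) end.
Definition addOm (a : T) (b : O) : T :=
  if pdec (b = z0) then a else appT a (TT TZ b TZ).

(* Theta_X, characterized by its defining recursion *)
Definition Theta_spec (X : O -> Prop) (Th : T -> O) :=
  forall xi, wfT xi ->
    (X (Th xi) /\ lt (star xi) (Th xi) /\
     (forall z, wfT z -> ltT z xi -> lt (star z) (Th xi) -> lt (Th z) (Th xi))) /\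
    (forall th, X th -> lt (star xi) th ->
       (forall z, wfT z -> ltT z xi -> lt (star z) th -> lt (Th z) th) ->
       leO (Th xi) th).

Fixpoint OmegaN (n : nat) : T :=
  match n with 0 => oneT | S m => TT (OmegaN m) one TZ end.

Definition in_hat (Th : T -> O) (xi : T) :=
  wfT xi /\ exists s, IsSup (fun n => Th (OmegaN n)) s /\ lt (star xi) s.

Definition inFIX (Th : T -> O) (xi : T) :=
  wfT xi /\ lt (star (fs xi one)) (star xi) /\ tau xi = Some (star xi) /\
  exists g, wfT g /\ ltT xi g /\ Th g = star xi.

End Defs.

Arguments club {O} X.
Arguments Theta_spec {O} X Th.
Arguments IsSup {O} f s.
Arguments wfT {O} x.
Arguments in_hat {O} Th xi.
Arguments inFIX {O} Th xi.
Arguments isLimitT {O} x.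
Arguments addOm {O} a b.
Arguments omul {O} x.

(* Along alpha + beta_n, Theta is strictly increasing: alpha + beta_n < alpha + beta_m
   and all coefficients of alpha + beta_n stay below Theta(alpha + beta_m).  Let s be
   the supremum of the Theta(alpha + beta_n).  As a limit of points of the club X, s
   lies in X, and every zeta < alpha + beta with zeta^* < s has Theta(zeta) < s:
   either zeta < alpha, or zeta = alpha + gamma with gamma below some beta_n.  Hence
   Theta(alpha + beta) <= s by minimality, as soon as (alpha + beta)^* < s, i.e.
   beta < s.  If instead beta = s, membership in hat-epsilon gives some zeta above
   alpha + beta with zeta^* < beta <= Theta(zeta); one with least Theta(zeta) has
   Theta(zeta) = beta, which puts alpha + beta into FIX(X). *)

From Stdlib Require Import ClassicalEpsilon ClassicalDescription Classical List PeanoNat.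
Set Implicit Arguments. Unset Strict Implicit.

Section OmegaOrder.
Context {O : Omega1}.
Local Notation lt := (ltO O).
Local Notation le := (leO O).

Lemma leO_ltO_trans (x y z : O) : le x y -> lt y z -> lt x z.
Proof. intros [->|Hxy] Hyz; [exact Hyz|exact (ltO_trans O _ _ _ Hxy Hyz)]. Qed.

Lemma ltO_leO_trans (x y z : O) : lt x y -> le y z -> lt x z.
Proof. intros Hxy [<-|Hyz]; [exact Hxy|exact (ltO_trans O _ _ _ Hxy Hyz)]. Qed.

Lemma leO_trans (x y z : O) : le x y -> le y z -> le x z.
Proof. intros Hxy [<-|Hyz]; [exact Hxy|right; exact (leO_ltO_trans Hxy Hyz)]. Qed.

Lemma not_ltO_leO (x y : O) : ~ lt x y -> le y x.
Proof.
  intro Hxy. destruct (ltO_total O x y) as [H|[H|H]];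
    [contradiction|left; auto|right; exact H].
Qed.

Lemma leO_not_ltO (x y : O) : le x y -> ~ lt y x.
Proof. intros Hxy Hyx. exact (ltO_irrefl O _ (leO_ltO_trans Hxy Hyx)). Qed.

Lemma leO_antisym (x y : O) : le x y -> le y x -> x = y.
Proof. intros [->|Hxy] Hyx; [reflexivity|exfalso; exact (leO_not_ltO Hyx Hxy)]. Qed.

Lemma exists_least (P : O -> Prop) :
  (exists x, P x) -> exists m, P m /\ forall y, P y -> le m y.
Proof.
  intros [x Px]. apply NNPP; intro Hnone.
  assert (Hempty : forall z, ~ P z).
  { intro z. induction z as [z IH] using (well_founded_ind (ltO_wf O)).
    intro Pz. apply Hnone. exists z; split; [exact Pz|].
    intros y Py. apply not_ltO_leO. intro Hyz. exact (IH y Hyz Py). }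
  exact (Hempty x Px).
Qed.

(* A largest element [a] would make [O] countable: inject [x < a] through the
   countable segment below [a], and send [a] itself to [0]. *)
Lemma ltO_unbounded (a : O) : exists y, lt a y.
Proof.
  apply NNPP; intro Hmax.
  destruct (ltO_segments_countable O a) as [f Hf].
  apply (ltO_uncountable O).
  exists (fun x => match excluded_middle_informative (lt x a) with
                   | left h => S (f (exist _ x h))
                   | right _ => 0
                   end).
  assert (Htop : forall x, ~ lt x a -> x = a).
  { intros x Hx. destruct (not_ltO_leO Hx) as [E|H]; [auto|].
    exfalso; apply Hmax; exists x; exact H. }
  intros x y.
  destruct (excluded_middle_informative (lt x a)) as [hx|hx];
    destruct (excluded_middle_informative (lt y a)) as [hy|hy];
    intro E; try discriminate.
  - injection E as E. exact (f_equal (@proj1_sig _ _) (Hf _ _ E)).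
  - rewrite (Htop x hx), (Htop y hy). reflexivity.
Qed.

Lemma z0_le (y : O) : le (z0 O) y.
Proof.
  apply not_ltO_leO. revert y. unfold z0, epsO. apply epsilon_spec.
  destruct (exists_least (P := fun _ : O => True) (ex_intro _ (inhO O) I)) as [m [_ Hm]].
  exists m. intros y Hy. exact (leO_not_ltO (Hm y I) Hy).
Qed.

Lemma neq_z0_gt (y : O) : y <> z0 O -> lt (z0 O) y.
Proof. intro Hy. destruct (z0_le y) as [E|H]; [congruence|exact H]. Qed.

Lemma succO_spec (c : O) : lt c (succO O c) /\ forall y, lt c y -> le (succO O c) y.
Proof.
  unfold succO, epsO. apply epsilon_spec.
  destruct (exists_least (ltO_unbounded c)) as [m Hm]. exists m; exact Hm.
Qed.

Lemma lt_succO_le (c y : O) : lt y (succO O c) -> le y c.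
Proof.
  intro Hy. apply not_ltO_leO. intro Hcy.
  exact (leO_not_ltO (proj2 (succO_spec c) y Hcy) Hy).
Qed.

Lemma z0_lt_one : lt (z0 O) (one O).
Proof. exact (proj1 (succO_spec (z0 O))). Qed.

Lemma one_lt_limit (b : O) : isLimitO O b -> lt (one O) b.
Proof.
  intros [Hb0 Hbs].
  destruct (proj2 (succO_spec (z0 O)) b (neq_z0_gt Hb0)) as [E|H]; [|exact H].
  exfalso; apply Hbs. exists (z0 O). symmetry; exact E.
Qed.

Lemma IsSup_lt_elem (f : nat -> O) (s a : O) :
  IsSup f s -> lt a s -> exists n, lt a (f n).
Proof.
  intros [_ Hleast] Has. apply NNPP; intro Hnone.
  assert (Hsa : le s a).
  { apply Hleast. intro n. apply not_ltO_leO. intro Han. apply Hnone; exists n; exact Han. }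
  exact (leO_not_ltO Hsa Has).
Qed.

Lemma IsSup_exists (f : nat -> O) (u : O) : (forall n, le (f n) u) -> exists s, IsSup f s.
Proof.
  intro Hu. destruct (exists_least (P := fun c => forall n, le (f n) c) (ex_intro _ u Hu))
    as [m [Hub Hleast]].
  exists m; split; [exact Hub|exact Hleast].
Qed.

Section Increasing.
Variables (f : nat -> O) (s : O).
Hypotheses (hinc : forall n, lt (f n) (f (S n))) (hs : IsSup f s).

Lemma IsSup_incr_lt (n : nat) : lt (f n) s.
Proof. exact (ltO_leO_trans (hinc n) (proj1 hs (S n))). Qed.

Lemma IsSup_incr_limit : isLimitO O s.
Proof.
  split.
  - intro E. apply (leO_not_ltO (z0_le (f 0))). rewrite <- E. apply IsSup_incr_lt.
  - intros [c E].
    assert (Hc : le s c).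
    { apply (proj2 hs). intro n. apply lt_succO_le. rewrite <- E. apply IsSup_incr_lt. }
    apply (leO_not_ltO Hc). rewrite E. apply succO_spec.
Qed.

End Increasing.

End OmegaOrder.

Section NormalForms.
Context {O : Omega1}.
Local Notation lt := (ltO O).
Local Notation T := (T O).
Local Notation TZ := (TZ O).

Lemma ltT_irrefl (x : T) : ~ ltT x x.
Proof.
  induction x as [|a IHa b g IHg]; simpl; [tauto|].
  intros [H|[_ [H|[_ H]]]]; [exact (IHa H)|exact (ltO_irrefl O _ H)|exact (IHg H)].
Qed.

Lemma ltT_trans (x y z : T) : ltT x y -> ltT y z -> ltT x z.
Proof.
  revert y z. induction x as [|a IHa b g IHg];
    intros [|a' b' g'] [|a'' b'' g'']; simpl; try tauto.
  intros [H1|[<- H1]] [H2|[<- H2]]; eauto.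
  right; split; [reflexivity|].
  destruct H1 as [H1|[<- H1]]; destruct H2 as [H2|[<- H2]]; eauto using ltO_trans.
Qed.

Lemma ltT_total (x y : T) : ltT x y \/ x = y \/ ltT y x.
Proof.
  revert y. induction x as [|a IHa b g IHg]; intros [|a' b' g']; simpl; auto.
  destruct (IHa a') as [H|[<-|H]]; auto 10.
  destruct (ltO_total O b b') as [H|[<-|H]]; auto 10.
  destruct (IHg g') as [H|[<-|H]]; auto 10.
Qed.

Lemma ltT_same_head (e : T) (b : O) (g h z : T) :
  (ltT (TT e b g) z \/ z = TT e b g) -> ltT z (TT e b h) ->
  exists g', z = TT e b g' /\ (ltT g g' \/ g' = g) /\ ltT g' h.
Proof.
  destruct z as [|e' b' g']; simpl; [intros [[]|E]; discriminate|].
  intros [H1|E] H2.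
  - exists g'.
    destruct H1 as [H1|[<- [H1|[<- H1]]]]; destruct H2 as [H2|[E [H2|[E' H2]]]];
      try (exfalso; eapply ltT_irrefl; eapply ltT_trans; eauto; fail);
      try (subst; exfalso; eapply ltT_irrefl; eauto; fail);
      try (subst; exfalso; eapply (ltO_irrefl O); eapply ltO_trans; eauto; fail);
      try (subst; exfalso; eapply (ltO_irrefl O); eauto; fail);
      subst; auto.
  - injection E as -> -> ->. exists g.
    destruct H2 as [H2|[_ [H2|[_ H2]]]];
      [exfalso; exact (ltT_irrefl H2)|exfalso; exact (ltO_irrefl O _ H2)|auto].
Qed.

Lemma appT_neq0 (a y : T) : y <> TZ -> appT a y <> TZ.
Proof. destruct a; simpl; [auto|discriminate]. Qed.

Lemma ltT_appT (a y : T) : y <> TZ -> ltT a (appT a y).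
Proof.
  intro Hy. induction a as [|a _ b g IHg]; simpl.
  - destruct y; simpl; [contradiction|exact I].
  - right; split; [reflexivity|right; split; [reflexivity|exact IHg]].
Qed.

Lemma appT_ltT_mono (a y y' : T) : ltT y y' -> ltT (appT a y) (appT a y').
Proof. intro H. induction a as [|a _ b g IHg]; simpl; auto. Qed.

Lemma fs_appT (a y : T) (t : O) : y <> TZ -> fs (appT a y) t = appT a (fs y t).
Proof.
  intro Hy. induction a as [|a _ b g IHg]; simpl; [reflexivity|].
  rewrite <- IHg. destruct (appT g y) eqn:E; [exfalso; exact (appT_neq0 Hy E)|reflexivity].
Qed.

Lemma tau_appT (a y : T) : y <> TZ -> tau (appT a y) = tau y.
Proof.
  intro Hy. induction a as [|a _ b g IHg]; simpl; [reflexivity|].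
  rewrite <- IHg. destruct (appT g y) eqn:E; [exfalso; exact (appT_neq0 Hy E)|reflexivity].
Qed.

Lemma addOm_z0 (a : T) : addOm a (z0 O) = a.
Proof. unfold addOm, pdec. destruct excluded_middle_informative; tauto. Qed.

Lemma addOm_neq0 (a : T) (c : O) : c <> z0 O -> addOm a c = appT a (TT TZ c TZ).
Proof. intro Hc. unfold addOm, pdec. destruct excluded_middle_informative; tauto. Qed.

Lemma addOm_TT (e g : T) (b c : O) : addOm (TT e b g) c = TT e b (addOm g c).
Proof. unfold addOm, pdec. destruct excluded_middle_informative; reflexivity. Qed.

Lemma addOm_ltT_mono (a : T) (c d : O) : lt c d -> ltT (addOm a c) (addOm a d).
Proof.
  intro Hcd. assert (Hd : d <> z0 O).
  { intro E; subst d. exact (leO_not_ltO (z0_le c) Hcd). }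
  rewrite (addOm_neq0 a Hd). destruct (classic (c = z0 O)) as [->|Hc].
  - rewrite addOm_z0. apply ltT_appT. discriminate.
  - rewrite (addOm_neq0 a Hc). apply appT_ltT_mono. simpl. auto.
Qed.

Lemma addOm_geT (a : T) (c : O) : ltT a (addOm a c) \/ addOm a c = a.
Proof.
  destruct (classic (c = z0 O)) as [->|Hc].
  - rewrite addOm_z0; auto.
  - rewrite (addOm_neq0 a Hc). left; apply ltT_appT; discriminate.
Qed.

Lemma wfT_addOm (a : T) (b c : O) : b <> z0 O -> wfT (addOm a b) -> wfT (addOm a c).
Proof.
  intro Hb. rewrite (addOm_neq0 a Hb). destruct (classic (c = z0 O)) as [->|Hc].
  - rewrite addOm_z0. induction a as [|e _ b' g IHg]; simpl; [tauto|].
    intros [He [Hg [Hb' Hlast]]]. repeat split; auto.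
    destruct g; simpl in *; auto.
  - rewrite (addOm_neq0 a Hc). induction a as [|e _ b' g IHg]; simpl.
    + intros _. repeat split; auto using neq_z0_gt.
    + intros [He [Hg [Hb' Hlast]]]. repeat split; auto.
      destruct g; simpl in *; auto.
Qed.

Lemma addOm_interval (a z : T) (b : O) : wfT z ->
  (ltT a z \/ z = a) -> ltT z (addOm a b) -> exists c, lt c b /\ z = addOm a c.
Proof.
  destruct (classic (b = z0 O)) as [->|Hb].
  { rewrite addOm_z0. intros _ [H| ->] H'; exfalso; eapply ltT_irrefl; eauto using ltT_trans. }
  rewrite (addOm_neq0 a Hb). revert z. induction a as [|e _ b1 g IHg]; intros z Hz Hge Hlt.
  - destruct z as [|e' b' g'].
    + exists (z0 O). split; [exact (neq_z0_gt Hb)|symmetry; apply addOm_z0].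
    + simpl in Hlt. destruct Hz as [_ [_ [Hb' Hlast]]].
      destruct Hlt as [Hlt|[-> [Hlt|[-> Hlt]]]];
        [destruct e'; simpl in Hlt; tauto| |destruct g'; simpl in Hlt; tauto].
      exists b'. split; [exact Hlt|].
      destruct g' as [|e3 b3 g3]; [|destruct e3; simpl in Hlast; tauto].
      rewrite addOm_neq0; [reflexivity|].
      intro E; subst b'. exact (ltO_irrefl O _ Hb').
  - destruct (ltT_same_head Hge Hlt) as [g' [-> [Hge' Hlt']]].
    destruct Hz as [_ [Hg' _]].
    destruct (IHg g' Hg' Hge' Hlt') as [c [Hc E]].
    exists c; split; [exact Hc|]. rewrite addOm_TT, E. reflexivity.
Qed.

End NormalForms.

Section Coefficients.
Context {O : Omega1}.
Local Notation lt := (ltO O).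
Local Notation le := (leO O).
Local Notation T := (T O).
Local Notation TZ := (TZ O).

Lemma maxO_spec (x y : O) :
  (maxO O x y = x \/ maxO O x y = y) /\ le x (maxO O x y) /\ le y (maxO O x y).
Proof.
  unfold maxO, pdec. destruct excluded_middle_informative as [H|H].
  - split; [right; reflexivity|split; [right; exact H|left; reflexivity]].
  - split; [left; reflexivity|split; [left; reflexivity|exact (not_ltO_leO H)]].
Qed.

Lemma fold_maxO_ub (l : list O) (e : O) : In e l -> le e (fold_right (maxO O) (z0 O) l).
Proof.
  induction l as [|x l IH]; simpl; [tauto|].
  destruct (maxO_spec x (fold_right (maxO O) (z0 O) l)) as [_ [Hx Hl]].
  intros [<-|H]; [exact Hx|exact (leO_trans (IH H) Hl)].
Qed.

Lemma fold_maxO_in (l : list O) : In (fold_right (maxO O) (z0 O) l) (z0 O :: l).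
Proof.
  induction l as [|x l IH]; simpl; [auto|].
  destruct (maxO_spec x (fold_right (maxO O) (z0 O) l)) as [[E|E] _]; rewrite E;
    [auto|simpl in IH; tauto].
Qed.

Lemma z0_in_Cset (x : T) : In (z0 O) (Cset x).
Proof. induction x; simpl; auto using in_or_app. Qed.

Lemma star_in_Cset (x : T) : In (star x) (Cset x).
Proof.
  unfold star. destruct (fold_maxO_in (Cset x)) as [E|H]; [rewrite <- E; apply z0_in_Cset|exact H].
Qed.

Lemma Cset_le_star (x : T) (e : O) : In e (Cset x) -> le e (star x).
Proof. apply fold_maxO_ub. Qed.

Lemma Cset_appT_l (a y : T) (e : O) : In e (Cset a) -> In e (Cset (appT a y)) \/ e = z0 O.
Proof.
  induction a as [|a _ b g IHg]; simpl.
  - intros [H|[]]; right; auto.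
  - intro H. repeat (apply in_app_or in H; destruct H as [H|H]); auto 6 using in_or_app.
    destruct (IHg H); auto 6 using in_or_app.
Qed.

Lemma Cset_appT_r (a y : T) (e : O) : In e (Cset y) -> In e (Cset (appT a y)).
Proof.
  induction a as [|a _ b g IHg]; simpl; [auto|].
  intro H. apply in_or_app; right; apply in_or_app; left; auto.
Qed.

Lemma Cset_appT_sub (a y : T) (e : O) :
  In e (Cset (appT a y)) -> In e (Cset a) \/ In e (Cset y).
Proof.
  induction a as [|a _ b g IHg]; simpl; [auto|].
  intro H. repeat (apply in_app_or in H; destruct H as [H|H]); auto 6 using in_or_app.
  destruct (IHg H); auto 6 using in_or_app.
Qed.

Lemma star_le_addOm_l (a : T) (c : O) : le (star a) (star (addOm a c)).
Proof.
  destruct (classic (c = z0 O)) as [->|Hc].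
  - rewrite addOm_z0; left; reflexivity.
  - rewrite (addOm_neq0 a Hc).
    destruct (Cset_appT_l (TT TZ c TZ) (star_in_Cset a)) as [H| ->];
      [exact (Cset_le_star H)|apply z0_le].
Qed.

Lemma star_le_addOm_r (a : T) (c : O) : le c (star (addOm a c)).
Proof.
  destruct (classic (c = z0 O)) as [->|Hc]; [apply z0_le|].
  rewrite (addOm_neq0 a Hc). apply Cset_le_star, Cset_appT_r. simpl; auto.
Qed.

Lemma Cset_addOm (a : T) (c e : O) : In e (Cset (addOm a c)) -> le e (star a) \/ e = c.
Proof.
  destruct (classic (c = z0 O)) as [->|Hc].
  - rewrite addOm_z0. left; exact (Cset_le_star H).
  - rewrite (addOm_neq0 a Hc). intro H.
    destruct (Cset_appT_sub H) as [H'|H']; [left; exact (Cset_le_star H')|].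
    simpl in H'. destruct H' as [<-|[<-|[<-|[]]]]; auto using z0_le.
Qed.

Lemma star_addOm_lt (a : T) (c t : O) :
  lt (star a) t -> lt c t -> lt (star (addOm a c)) t.
Proof.
  intros Ha Hc. destruct (Cset_addOm (star_in_Cset (addOm a c))) as [H| ->];
    [exact (leO_ltO_trans H Ha)|exact Hc].
Qed.

Lemma star_addOm (a : T) (c : O) : lt (star a) c -> star (addOm a c) = c.
Proof.
  intro Hac. apply leO_antisym; [|apply star_le_addOm_r].
  destruct (Cset_addOm (star_in_Cset (addOm a c))) as [H| ->];
    [right; exact (leO_ltO_trans H Hac)|left; reflexivity].
Qed.

Lemma fs_addOm_limit (a : T) (b : O) :
  isLimitO O b -> fs (addOm a b) (one O) = addOm a (one O).
Proof.
  intros Hb. assert (H1 : one O <> z0 O).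
  { intro E. apply (ltO_irrefl O (z0 O)). rewrite <- E at 2. exact z0_lt_one. }
  rewrite (addOm_neq0 a (proj1 Hb)), (addOm_neq0 a H1), fs_appT by discriminate.
  simpl. unfold omt, pdec.
  destruct (excluded_middle_informative (isLimitO O b)); [|contradiction].
  destruct excluded_middle_informative; [contradiction|reflexivity].
Qed.

Lemma tau_addOm_limit (a : T) (b : O) : isLimitO O b -> tau (addOm a b) = Some b.
Proof.
  intros Hb. rewrite (addOm_neq0 a (proj1 Hb)), tau_appT by discriminate.
  simpl. unfold pdec. destruct excluded_middle_informative; [reflexivity|contradiction].
Qed.

Lemma OmegaN_above (x : T) : exists k, ltT x (OmegaN O k).
Proof.
  induction x as [|a [k IHa] b g _]; [exists 0; exact I|].
  exists (S k); simpl; auto.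
Qed.

Lemma OmegaN_lt_succ (n : nat) : ltT (OmegaN O n) (OmegaN O (S n)).
Proof. induction n; simpl; auto. Qed.

Lemma OmegaN_mono (n m : nat) : n <= m -> ltT (OmegaN O n) (OmegaN O m) \/ n = m.
Proof.
  induction 1 as [|m _ IH]; [auto|left].
  pose proof (OmegaN_lt_succ m) as Hstep.
  destruct IH as [H| <-]; [exact (ltT_trans H Hstep)|exact Hstep].
Qed.

Lemma wfT_OmegaN (n : nat) : wfT (OmegaN O n).
Proof. pose proof (z0_lt_one (O := O)). induction n; simpl; auto. Qed.

Lemma star_OmegaN (n : nat) : star (OmegaN O n) = one O.
Proof.
  assert (Hsub : forall e, In e (Cset (OmegaN O n)) -> e = z0 O \/ e = one O).
  { induction n; simpl; intros e H.
    - destruct H as [H|[H|[H|[]]]]; subst; auto.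
    - repeat (apply in_app_or in H; destruct H as [H|H]); auto; simpl in H;
        destruct H as [H|[H|[]]]; subst; auto. }
  assert (Hone : In (one O) (Cset (OmegaN O n))).
  { destruct n; simpl; [auto|apply in_or_app; right; simpl; auto]. }
  destruct (Hsub _ (star_in_Cset (OmegaN O n))) as [E|E]; [|exact E].
  exfalso. apply (leO_not_ltO (Cset_le_star Hone)). rewrite E. exact z0_lt_one.
Qed.

End Coefficients.

Section Theta.
Context {O : Omega1} (X : O -> Prop) (Th : T O -> O).
Local Notation lt := (ltO O).
Local Notation le := (leO O).
Hypothesis hTh : Theta_spec X Th.

Definition Theta_closed (xi : T O) (th : O) : Prop :=
  forall z, wfT z -> ltT z xi -> lt (star z) th -> lt (Th z) th.

Lemma Theta_in_X (xi : T O) : wfT xi -> X (Th xi).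
Proof. intro Hxi. apply (hTh Hxi). Qed.

Lemma star_lt_Theta (xi : T O) : wfT xi -> lt (star xi) (Th xi).
Proof. intro Hxi. apply (hTh Hxi). Qed.

Lemma Theta_closed_Theta (xi : T O) : wfT xi -> Theta_closed xi (Th xi).
Proof. intro Hxi. exact (proj2 (proj2 (proj1 (hTh Hxi)))). Qed.

Lemma Theta_le (xi : T O) (th : O) :
  wfT xi -> X th -> lt (star xi) th -> Theta_closed xi th -> le (Th xi) th.
Proof. intro Hxi. apply (hTh Hxi). Qed.

Lemma Theta_addOm_lt (a : T O) (c d : O) :
  wfT (addOm a c) -> wfT (addOm a d) -> lt c d -> lt (Th (addOm a c)) (Th (addOm a d)).
Proof.
  intros Hc Hd Hcd. apply (Theta_closed_Theta Hd Hc (addOm_ltT_mono a Hcd)).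
  pose proof (star_lt_Theta Hd) as Hstar.
  apply star_addOm_lt.
  - exact (leO_ltO_trans (star_le_addOm_l a d) Hstar).
  - exact (ltO_trans O _ _ _ Hcd (leO_ltO_trans (star_le_addOm_r a d) Hstar)).
Qed.

Lemma Theta_OmegaN_mono (n m : nat) : n <= m -> le (Th (OmegaN O n)) (Th (OmegaN O m)).
Proof.
  intro Hnm. destruct (OmegaN_mono (O := O) Hnm) as [H| <-]; [right|left; reflexivity].
  apply (Theta_closed_Theta (wfT_OmegaN m) (wfT_OmegaN n) H).
  rewrite star_OmegaN, <- (star_OmegaN (O := O) m). exact (star_lt_Theta (wfT_OmegaN m)).
Qed.

Lemma in_hat_Theta_above (xi : T O) : in_hat Th xi ->
  exists z, wfT z /\ ltT xi z /\ star z = one O /\ lt (star xi) (Th z).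
Proof.
  intros [_ [s [Hs Hxi]]].
  destruct (IsSup_lt_elem Hs Hxi) as [n Hn].
  destruct (OmegaN_above xi) as [k Hk].
  exists (OmegaN O (n + k)). split; [apply wfT_OmegaN|split; [|split]].
  - destruct (OmegaN_mono (O := O) (Nat.le_add_l k n)) as [H|E];
      [exact (ltT_trans Hk H)|rewrite <- E; exact Hk].
  - apply star_OmegaN.
  - exact (ltO_leO_trans Hn (Theta_OmegaN_mono (Nat.le_add_r n k))).
Qed.

(* Among the [z > xi] with [z^* < th <= Theta z], one with least [Theta z] is
   forced down to [Theta z = th] by the minimality clause of [Theta_spec]. *)
Lemma Theta_attains (xi : T O) (th : O) :
  X th -> le th (star xi) -> Theta_closed xi th ->
  (exists z, wfT z /\ ltT xi z /\ lt (star z) th /\ le th (Th z)) ->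
  exists z, wfT z /\ ltT xi z /\ Th z = th.
Proof.
  intros HX Hxi Hclosed Hex.
  destruct (exists_least (P := fun t => exists z, (wfT z /\ ltT xi z /\ lt (star z) th /\
              le th (Th z)) /\ Th z = t)) as [t [[z [[Hz [Hxiz [Hzth Hthz]]] <-]] Hleast]].
  { destruct Hex as [z Hz]. exists (Th z), z. auto. }
  exists z. split; [exact Hz|split; [exact Hxiz|]].
  apply leO_antisym; [|exact Hthz].
  apply (Theta_le Hz HX Hzth). intros y Hy Hyz Hyth.
  destruct (ltT_total y xi) as [H|[->|H]].
  - exact (Hclosed y Hy H Hyth).
  - exfalso. exact (leO_not_ltO Hxi Hyth).
  - apply NNPP. intro Hnlt. apply not_ltO_leO in Hnlt.
    assert (Hle : le (Th z) (Th y)) by (apply Hleast; exists y; auto).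
    apply (leO_not_ltO Hle).
    exact (Theta_closed_Theta Hz Hy Hyz (ltO_leO_trans Hyth Hthz)).
Qed.

Lemma inFIX_addOm_limit (a : T O) (b : O) :
  wfT (addOm a b) -> isLimitO O b -> lt (star a) b ->
  (exists g, wfT g /\ ltT (addOm a b) g /\ Th g = b) -> inFIX Th (addOm a b).
Proof.
  intros Hwf Hb Hab Hg. unfold inFIX.
  rewrite (star_addOm Hab), (fs_addOm_limit a Hb), (tau_addOm_limit a Hb).
  split; [exact Hwf|split; [|split; [reflexivity|exact Hg]]].
  exact (star_addOm_lt Hab (one_lt_limit Hb)).
Qed.

End Theta.

Section LimitArgument.
Context {O : Omega1} (X : O -> Prop) (Th : T O -> O).
Local Notation lt := (ltO O).
Local Notation le := (leO O).
Hypotheses (hX : club X) (hTh : Theta_spec X Th).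
Variables (a : T O) (b : O) (bs : nat -> O).
Hypotheses (hwf : wfT (addOm a b)) (hinc : forall n, lt (bs n) (bs (S n)))
  (hsup : IsSup bs b).

Lemma limit_sup_seq : isLimitO O b.
Proof. exact (IsSup_incr_limit hinc hsup). Qed.

Lemma wfT_addOm_seq (c : O) : wfT (addOm a c).
Proof. exact (wfT_addOm c (proj1 limit_sup_seq) hwf). Qed.

Lemma Theta_addOm_seq_incr (n : nat) :
  lt (Th (addOm a (bs n))) (Th (addOm a (bs (S n)))).
Proof. exact (Theta_addOm_lt hTh (wfT_addOm_seq _) (wfT_addOm_seq _) (hinc n)). Qed.

Section Supremum.
Variable s : O.
Hypothesis hs : IsSup (fun n => Th (addOm a (bs n))) s.

Lemma Theta_seq_lt_sup (n : nat) : lt (Th (addOm a (bs n))) s.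
Proof. exact (IsSup_incr_lt Theta_addOm_seq_incr hs n). Qed.

Lemma sup_Theta_seq_in_X : X s.
Proof.
  apply (proj2 hX s (IsSup_incr_limit Theta_addOm_seq_incr hs)).
  intros t Ht. destruct (IsSup_lt_elem hs Ht) as [n Hn].
  exists (Th (addOm a (bs n))).
  split; [exact (Theta_in_X hTh (wfT_addOm_seq _))|split; [exact Hn|apply Theta_seq_lt_sup]].
Qed.

Lemma sup_Theta_seq_closed : Theta_closed Th (addOm a b) s.
Proof.
  intros z Hz Hzxi Hzs. destruct (ltT_total z a) as [Hza|Haz].
  - destruct (IsSup_lt_elem hs Hzs) as [n Hn].
    apply (ltO_trans O _ (Th (addOm a (bs n)))); [|apply Theta_seq_lt_sup].
    apply (Theta_closed_Theta hTh (wfT_addOm_seq _) Hz); [|exact Hn].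
    destruct (addOm_geT a (bs n)) as [H|E]; [exact (ltT_trans Hza H)|rewrite E; exact Hza].
  - assert (Haz' : ltT a z \/ z = a) by tauto.
    destruct (addOm_interval Hz Haz' Hzxi) as [c [Hcb ->]].
    destruct (IsSup_lt_elem hsup Hcb) as [m Hm].
    exact (ltO_trans O _ _ _
             (Theta_addOm_lt hTh (wfT_addOm_seq _) (wfT_addOm_seq _) Hm) (Theta_seq_lt_sup m)).
Qed.

Lemma star_addOm_seq_lt_sup (n : nat) : lt (star (addOm a (bs n))) s.
Proof.
  exact (ltO_trans O _ _ _ (star_lt_Theta hTh (wfT_addOm_seq _)) (Theta_seq_lt_sup n)).
Qed.

Lemma star_lt_sup : lt (star a) s.
Proof. exact (leO_ltO_trans (star_le_addOm_l a (bs 0)) (star_addOm_seq_lt_sup 0)). Qed.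

Lemma sup_seq_le_sup : le b s.
Proof.
  apply (proj2 hsup). intro n. right.
  exact (leO_ltO_trans (star_le_addOm_r a (bs n)) (star_addOm_seq_lt_sup n)).
Qed.

Lemma sup_eq_inFIX : s = b -> in_hat Th (addOm a b) -> inFIX Th (addOm a b).
Proof.
  intros Hsb Hhat. pose proof star_lt_sup as Ha. rewrite Hsb in Ha.
  pose proof (star_addOm Ha) as Hstar.
  apply (inFIX_addOm_limit hwf limit_sup_seq Ha).
  apply Theta_attains with (X := X).
  - exact hTh.
  - rewrite <- Hsb. exact sup_Theta_seq_in_X.
  - rewrite Hstar. left; reflexivity.
  - pose proof sup_Theta_seq_closed as Hclosed. rewrite Hsb in Hclosed. exact Hclosed.
  - destruct (in_hat_Theta_above hTh Hhat) as [z [Hz [Hxiz [Hzone Hzth]]]].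
    rewrite Hstar in Hzth. exists z.
    split; [exact Hz|split; [exact Hxiz|split; [|right; exact Hzth]]].
    rewrite Hzone. exact (one_lt_limit limit_sup_seq).
Qed.

Lemma Theta_le_sup : in_hat Th (addOm a b) -> ~ inFIX Th (addOm a b) ->
  le (Th (addOm a b)) s.
Proof.
  intros Hhat Hfix. destruct sup_seq_le_sup as [Hbs|Hbs].
  { exfalso. apply Hfix. apply sup_eq_inFIX; [symmetry; exact Hbs|exact Hhat]. }
  apply (Theta_le hTh hwf sup_Theta_seq_in_X (star_addOm_lt star_lt_sup Hbs)).
  exact sup_Theta_seq_closed.
Qed.

End Supremum.

Lemma Theta_addOm_seq_IsSup : in_hat Th (addOm a b) -> ~ inFIX Th (addOm a b) ->
  IsSup (fun n => Th (addOm a (bs n))) (Th (addOm a b)).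
Proof.
  intros Hhat Hfix.
  assert (Hub : forall n, le (Th (addOm a (bs n))) (Th (addOm a b))).
  { intro n. right.
    exact (Theta_addOm_lt hTh (wfT_addOm_seq _) hwf (IsSup_incr_lt hinc hsup n)). }
  destruct (IsSup_exists Hub) as [s hs].
  split; [exact Hub|].
  intros c Hc. exact (leO_trans (Theta_le_sup hs Hhat Hfix) (proj2 hs c Hc)).
Qed.

End LimitArgument.


Theorem lemma4p3 (O : Omega1) (X : O -> Prop) (Th : T O -> O)
  (hX : club X) (h0 : ~ X (z0 O)) (hTh : Theta_spec X Th)
  (at_ : T O) (hat : wfT at_) (b : O) (bs : nat -> O)
  (hhat : in_hat Th (addOm (omul at_) b))
  (hlim : isLimitT (addOm (omul at_) b))
  (hfix : ~ inFIX Th (addOm (omul at_) b))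
  (hinc : forall n, ltO O (bs n) (bs (S n)))
  (hsup : IsSup bs b) :
  (forall n, ltO O (Th (addOm (omul at_) (bs n))) (Th (addOm (omul at_) (bs (S n))))) /\
  IsSup (fun n => Th (addOm (omul at_) (bs n))) (Th (addOm (omul at_) b)).
Proof.
  pose proof (proj1 hhat) as hwf.
  split.
  - exact (Theta_addOm_seq_incr hTh hwf hinc hsup).
  - exact (Theta_addOm_seq_IsSup hX hTh hwf hinc hsup hhat hfix).
Qed.
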